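(* Let $(A,\mu,\Delta_r,\alpha,\beta,\psi=\beta,\omega=\alpha)$ be a quasitriangular infinitesimal BiHom-bialgebra with $r=\sum_i x_i\otimes y_i\in A\otimes A$, and write $\Delta=\Delta_r$. Then: (i) $\Delta(a)=\sum_i\alpha(x_i)\otimes y_i\cdot a-\sum_i a\cdot x_i\otimes\beta(y_i)$ for all $a\in A$; (ii) $(\Delta\otimes\beta)(r)=r_{23}r_{13}$; (iii) $(\alpha\otimes\Delta)(r)=-r_{13}r_{12}$. Conversely, if an infinitesimal BiHom-bialgebra $(A,\mu,\Delta,\alpha,\beta,\psi=\beta,\omega=\alpha)$ satisfies (i), (ii) and (iii) for some $r=\sum_i x_i\otimes y_i\in A\otimes A$ with $(\alpha\otimes\alpha)(r)=r=(\beta\otimes\beta)(r)$, then $\Delta=\Delta_r$ and $(A,\mu,\Delta_r,\alpha,\beta,\psi=\beta,\omega=\alpha)$ is a quasitriangular infinitesimal BiHom-bialgebra.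
   Context: Work over a field. A BiHom-associative algebra is a 4-tuple $(A,\mu,\alpha,\beta)$ with $\alpha,\beta$ commuting linear maps, multiplicative for $\mu$ (written $a\cdot b$), and $\alpha(x)\cdot(y\cdot z)=(x\cdot y)\cdot\beta(z)$. A BiHom-coassociative coalgebra is $(C,\Delta,\psi,\omega)$ with $\psi\omega=\omega\psi$, $(\psi\otimes\psi)\Delta=\Delta\psi$, $(\omega\otimes\omega)\Delta=\Delta\omega$ and $(\Delta\otimes\psi)\Delta=(\omega\otimes\Delta)\Delta$. An infinitesimal BiHom-bialgebra is a 7-tuple $(A,\mu,\Delta,\alpha,\beta,\psi,\omega)$ with $(A,\mu,\alpha,\beta)$ BiHom-associative, $(A,\Delta,\psi,\omega)$ BiHom-coassociative, and for all $a,b$ (with $\Delta(a)=a_1\otimes a_2$): $\Delta(a\cdot b)=\omega(a)\cdot b_1\otimes\beta(b_2)+\alpha(a_1)\otimes a_2\cdot\psi(b)$; $\alpha,\beta$ each commute with $\psi,\omega$; $(\alpha\otimes\alpha)\Delta=\Delta\alpha$, $(\beta\otimes\beta)\Delta=\Delta\beta$; $\psi,\omega$ multiplicative. For $r=\sum_i x_i\otimes y_i$ with $(\alpha\otimes\alpha)(r)=r=(\beta\otimes\beta)(r)$, set $\Delta_r(a)=\sum_i\alpha(x_i)\otimes y_i\cdot a-\sum_i a\cdot x_i\otimes\beta(y_i)$, $r_{12}r_{23}=\sum_{i,j}\alpha(x_i)\otimes y_i\cdot x_j\otimes\beta(y_j)$, $r_{13}r_{12}=\sum_{i,j}x_i\cdot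 x_j\otimes\beta(y_j)\otimes\beta(y_i)$, $r_{23}r_{13}=\sum_{i,j}\alpha(x_i)\otimes\alpha(x_j)\otimes y_j\cdot y_i$, and $A(r)=r_{13}r_{12}-r_{12}r_{23}+r_{23}r_{13}$. Actions on $A^{\otimes3}$: $a\bullet(x\otimes y\otimes z)=\alpha(a)\cdot x\otimes\beta(y)\otimes\beta(z)$, $(x\otimes y\otimes z)\bullet a=\alpha(x)\otimes\alpha(y)\otimes z\cdot\beta(a)$. A coboundary infinitesimal BiHom-bialgebra is $(A,\mu,\Delta_r,\alpha,\beta,\psi=\beta,\omega=\alpha)$ where $(A,\mu,\alpha,\beta)$ is BiHom-associative and $r$ satisfies $(\alpha\otimes\alpha)(r)=r=(\beta\otimes\beta)(r)$ and $a\bullet A(r)=A(r)\bullet a$ for all $a$ (such a tuple is an infinitesimal BiHom-bialgebra). It is quasitriangular if moreover $A(r)=0$. *)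

(* Tensors A^{(x)2}, A^{(x)3} over a field K are represented by
   finite lists of elementary tensors (formal sums), compared up to the equality
   of the tensor product: two formal sums are equal in A (x) A iff every bilinear
   form A x A -> K takes the same value on them (vector spaces over a field). *)
From HB Require Import structures.
From mathcomp Require Import all_boot all_order all_algebra.
Set Implicit Arguments. Unset Strict Implicit. Unset Printing Implicit Defensive.
Import GRing.Theory.
Local Open Scope ring_scope.

Section BiHom.
Variables (K : fieldType) (A : lmodType K).

Definition bilin_form (f : A -> A -> K) :=
  (forall x c y z, f x (c *: y + z) = c * f x y + f x z) /\
  (forall y c x z, f (c *: x + z) y = c * f x y + f z y).

Definition trilin_form (f : A -> A -> A -> K) :=
  [/\ forall x y c z w, f x y (c *: z + w) = c * f x y z + f x y w,
      forall x z c y w, f x (c *: y + w) z = c * f x y z + f x w z &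
      forall y z c x w, f (c *: x + w) y z = c * f x y z + f w y z].

Definition ev2 (f : A -> A -> K) (t : seq (A * A)) := \sum_(p <- t) f p.1 p.2.
Definition ev3 (f : A -> A -> A -> K) (t : seq (A * A * A)) :=
  \sum_(p <- t) f p.1.1 p.1.2 p.2.

Definition teq2 (s t : seq (A * A)) :=
  forall f, bilin_form f -> ev2 f s = ev2 f t.
Definition teq3 (s t : seq (A * A * A)) :=
  forall f, trilin_form f -> ev3 f s = ev3 f t.

Definition neg3 (t : seq (A * A * A)) := [seq (- p.1.1, p.1.2, p.2) | p <- t].

Definition tmap2 (f g : A -> A) (t : seq (A * A)) := [seq (f p.1, g p.2) | p <- t].

(* (D (x) f)(t) and (f (x) D)(t) for D : A -> A (x) A *)
Definition tDx (D : A -> seq (A * A)) (f : A -> A) (t : seq (A * A)) :=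
  flatten [seq [seq (q.1, q.2, f p.2) | q <- D p.1] | p <- t].
Definition txD (f : A -> A) (D : A -> seq (A * A)) (t : seq (A * A)) :=
  flatten [seq [seq (f p.1, q.1, q.2) | q <- D p.2] | p <- t].

Definition bilin_map (mu : A -> A -> A) :=
  (forall x c y z, mu x (c *: y + z) = c *: mu x y + mu x z) /\
  (forall y c x z, mu (c *: x + z) y = c *: mu x y + mu z y).

Definition lin_comul (D : A -> seq (A * A)) :=
  forall c a b, teq2 (D (c *: a + b)) ([seq (c *: q.1, q.2) | q <- D a] ++ D b).

Definition BiHomAssoc (mu : A -> A -> A) (al be : A -> A) :=
  [/\ bilin_map mu,
      forall x, al (be x) = be (al x),
      forall x y, al (mu x y) = mu (al x) (al y),
      forall x y, be (mu x y) = mu (be x) (be y) &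
      forall x y z, mu (al x) (mu y z) = mu (mu x y) (be z)].

Definition BiHomCoassoc (D : A -> seq (A * A)) (psi om : A -> A) :=
  [/\ lin_comul D,
      forall x, psi (om x) = om (psi x),
      forall a, teq2 (tmap2 psi psi (D a)) (D (psi a)),
      forall a, teq2 (tmap2 om om (D a)) (D (om a)) &
      forall a, teq3 (tDx D psi (D a)) (txD om D (D a))].

Definition InfBiHomBialg (mu : A -> A -> A) (D : A -> seq (A * A))
    (al be psi om : A -> A) :=
  BiHomAssoc mu al be /\ BiHomCoassoc D psi om /\
  [/\
      forall a b, teq2 (D (mu a b))
        ([seq (mu (om a) q.1, be q.2) | q <- D b] ++
         [seq (al q.1, mu q.2 (psi b)) | q <- D a]),
      [/\ forall x, al (psi x) = psi (al x),
          forall x, al (om x) = om (al x),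
          forall x, be (psi x) = psi (be x) &
          forall x, be (om x) = om (be x)],
      ((forall a, teq2 (tmap2 al al (D a)) (D (al a))) /\
       (forall a, teq2 (tmap2 be be (D a)) (D (be a)))) &
      ((forall x y, psi (mu x y) = mu (psi x) (psi y)) /\
       (forall x y, om (mu x y) = mu (om x) (om y)))].

Variables (mu : A -> A -> A) (al be : A -> A).

Definition Delta_r (r : seq (A * A)) (a : A) : seq (A * A) :=
  [seq (al p.1, mu p.2 a) | p <- r] ++ [seq (- mu a p.1, be p.2) | p <- r].

(* p = x_i (x) y_i, q = x_j (x) y_j *)
Definition r12r23 (r : seq (A * A)) : seq (A * A * A) :=
  [seq (al p.1, mu p.2 q.1, be q.2) | p <- r, q <- r].
Definition r13r12 (r : seq (A * A)) : seq (A * A * A) :=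
  [seq (mu p.1 q.1, be q.2, be p.2) | p <- r, q <- r].
Definition r23r13 (r : seq (A * A)) : seq (A * A * A) :=
  [seq (al p.1, al q.1, mu q.2 p.2) | p <- r, q <- r].

Definition Ar (r : seq (A * A)) : seq (A * A * A) :=
  r13r12 r ++ neg3 (r12r23 r) ++ r23r13 r.

Definition lact (a : A) (t : seq (A * A * A)) :=
  [seq (mu (al a) p.1.1, be p.1.2, be p.2) | p <- t].
Definition ract (t : seq (A * A * A)) (a : A) :=
  [seq (al p.1.1, al p.1.2, mu p.2 (be a)) | p <- t].

Definition r_invariant (r : seq (A * A)) :=
  teq2 (tmap2 al al r) r /\ teq2 (tmap2 be be r) r.

(* coboundary infinitesimal BiHom-bialgebra (A, mu, Delta_r, al, be, psi = be, om = al);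
   the tuple being an infinitesimal BiHom-bialgebra is recorded explicitly *)
Definition Coboundary (r : seq (A * A)) :=
  [/\ BiHomAssoc mu al be,
      r_invariant r,
      forall a, teq3 (lact a (Ar r)) (ract (Ar r) a) &
      InfBiHomBialg mu (Delta_r r) al be be al].

Definition Quasitriangular (r : seq (A * A)) :=
  Coboundary r /\ teq3 (Ar r) [::].

End BiHom.

(* Expanding the definitions, (Delta_r (x) be)(r) = r12r23 - r13r12 and
   (al (x) Delta_r)(r) = r23r13 - r12r23, so, since
   A(r) = r13r12 - r12r23 + r23r13, each of (ii) and (iii) is equivalent to
   A(r) = 0.  For the converse, (i) says that D and Delta_r agree as maps into
   A (x) A, and every axiom of an infinitesimal BiHom-bialgebra only sees the
   comultiplication through such tensor equalities (the structure maps being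
   linear); A(r) = 0 makes the invariance condition a . A(r) = A(r) . a
   trivial. *)
From HB Require Import structures.
From mathcomp Require Import all_boot all_order all_algebra.
From mathcomp Require Import ring.
Set Implicit Arguments. Unset Strict Implicit. Unset Printing Implicit Defensive.
Import GRing.Theory.
Local Open Scope ring_scope.

Section Tensors.
Variables (K : fieldType) (A : lmodType K).

Lemma scalarN (g : A -> K) x : scalar g -> g (- x) = - g x.
Proof. by move=> Lg; rewrite -scaleN1r (scalable_linear Lg) /= mulN1r. Qed.

Lemma scaler_linear (c : K) : linear ( *:%R c : A -> A).
Proof. by move=> d x y; rewrite /= scalerDr !scalerA mulrC. Qed.

Lemma bilin_form_scalarl (f : A -> A -> K) : bilin_form f -> forall y, scalar (f^~ y).
Proof. by case=> _ Hf y c x z; apply: Hf. Qed.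

Section Trilinear.
Variables (f : A -> A -> A -> K) (Hf : trilin_form f).

Lemma trilin_form_scalar1 y z : scalar (fun x => f x y z).
Proof. by move=> c x w; case: Hf => _ _ ->. Qed.

Lemma trilin_form_scalar2 x z : scalar (fun y => f x y z).
Proof. by move=> c y w; case: Hf => _ -> _. Qed.

Lemma trilin_form_bilin12 z : bilin_form (fun x y => f x y z).
Proof. by case: Hf => _ H2 H3; split=> *; rewrite ?H2 ?H3. Qed.

Lemma trilin_form_bilin23 x : bilin_form (f x).
Proof. by case: Hf => H1 H2 _; split=> *; rewrite ?H1 ?H2. Qed.

Lemma ev3_neg3 t : ev3 f (neg3 t) = - ev3 f t.
Proof.
rewrite /ev3 big_map -sumrN; apply: eq_bigr => p _ /=.
exact: scalarN (trilin_form_scalar1 _ _).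
Qed.
End Trilinear.

Lemma ev2_cat (f : A -> A -> K) s t : ev2 f (s ++ t) = ev2 f s + ev2 f t.
Proof. exact: big_cat. Qed.

Lemma ev3_cat (f : A -> A -> A -> K) s t : ev3 f (s ++ t) = ev3 f s + ev3 f t.
Proof. exact: big_cat. Qed.

Lemma teq2_sym (s t : seq (A * A)) : teq2 s t -> teq2 t s.
Proof. by move=> E f Hf; rewrite E. Qed.

Lemma teq2_trans (s t u : seq (A * A)) : teq2 s t -> teq2 t u -> teq2 s u.
Proof. by move=> E1 E2 f Hf; rewrite E1 ?E2. Qed.

Lemma teq2_cat (s s' t t' : seq (A * A)) :
  teq2 s s' -> teq2 t t' -> teq2 (s ++ t) (s' ++ t').
Proof. by move=> E1 E2 f Hf; rewrite !ev2_cat E1 ?E2. Qed.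

Lemma teq2_tmap2 (g h : A -> A) s t : linear g -> linear h ->
  teq2 s t -> teq2 (tmap2 g h s) (tmap2 g h t).
Proof.
move=> Lg Lh E f [Hf2 Hf1]; rewrite /ev2 !big_map.
by apply: (E (fun x y => f (g x) (h y))); split=> *; rewrite ?Lg ?Lh ?Hf1 ?Hf2.
Qed.

Lemma teq3_sym (s t : seq (A * A * A)) : teq3 s t -> teq3 t s.
Proof. by move=> E f Hf; rewrite E. Qed.

Lemma teq3_trans (s t u : seq (A * A * A)) : teq3 s t -> teq3 t u -> teq3 s u.
Proof. by move=> E1 E2 f Hf; rewrite E1 ?E2. Qed.

Lemma teq3_map (g1 g2 g3 : A -> A) s t :
  linear g1 -> linear g2 -> linear g3 -> teq3 s t ->
  teq3 [seq (g1 p.1.1, g2 p.1.2, g3 p.2) | p <- s]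
       [seq (g1 p.1.1, g2 p.1.2, g3 p.2) | p <- t].
Proof.
move=> L1 L2 L3 E f [Hf3 Hf2 Hf1]; rewrite /ev3 !big_map.
by apply: (E (fun x y z => f (g1 x) (g2 y) (g3 z)));
  split=> *; rewrite ?L1 ?L2 ?L3 ?Hf1 ?Hf2 ?Hf3.
Qed.

Lemma teq3_nil_sub (s u v : seq (A * A * A)) :
  (forall f, trilin_form f -> ev3 f s = ev3 f u - ev3 f v) ->
  teq3 s [::] <-> teq3 u v.
Proof.
move=> Es; split=> E f Hf; move: (E f Hf); rewrite Es // /ev3 big_nil.
  by move/eqP; rewrite subr_eq0 => /eqP.
by move=> ->; rewrite subrr.
Qed.

Lemma ev2_comul_scalar (D : A -> seq (A * A)) (f : A -> A -> K) :
  lin_comul D -> bilin_form f -> scalar (fun a => ev2 f (D a)).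
Proof.
move=> LD Hf c a b; rewrite (LD c a b f Hf) ev2_cat /ev2 big_map mulr_sumr.
congr (_ + _); apply: eq_bigr => q _.
exact: (scalable_linear (bilin_form_scalarl Hf _)).
Qed.

Lemma lin_comul_teq2 (D D' : A -> seq (A * A)) :
  lin_comul D -> (forall a, teq2 (D a) (D' a)) -> lin_comul D'.
Proof.
move=> LD E c a b; apply: teq2_trans (teq2_sym (E _)) _.
apply: teq2_trans (LD c a b) _; apply: teq2_cat (E b).
exact: (teq2_tmap2 (g := *:%R c) (h := id) (scaler_linear c) (fun _ _ _ => erefl)).
Qed.

Lemma ev3_tDx (f : A -> A -> A -> K) D g t :
  ev3 f (tDx D g t) = \sum_(p <- t) ev2 (fun x y => f x y (g p.2)) (D p.1).
Proof. by rewrite /ev3 big_flatten big_map; apply: eq_bigr => p _; rewrite big_map. Qed.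

Lemma ev3_txD (f : A -> A -> A -> K) g D t :
  ev3 f (txD g D t) = \sum_(p <- t) ev2 (fun x y => f (g p.1) x y) (D p.2).
Proof. by rewrite /ev3 big_flatten big_map; apply: eq_bigr => p _; rewrite big_map. Qed.

Section TensorComul.
Variables (D D' : A -> seq (A * A)) (g : A -> A).
Hypotheses (LD : lin_comul D) (Lg : linear g) (E : forall a, teq2 (D a) (D' a)).

Lemma teq3_tDx (t t' : seq (A * A)) : teq2 t t' -> teq3 (tDx D g t) (tDx D' g t').
Proof.
move=> Et f Hf; rewrite !ev3_tDx.
under [RHS]eq_bigr do rewrite -(E _ (trilin_form_bilin12 Hf _)).
apply: (Et (fun x y => ev2 (fun u v => f u v (g y)) (D x))); split=> [x c y z|y c x z].
  rewrite /ev2 mulr_sumr -big_split; apply: eq_bigr => q _ /=.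
  by rewrite Lg; case: Hf => ->.
exact: (ev2_comul_scalar LD (trilin_form_bilin12 Hf _) c x z).
Qed.

Lemma teq3_txD (t t' : seq (A * A)) : teq2 t t' -> teq3 (txD g D t) (txD g D' t').
Proof.
move=> Et f Hf; rewrite !ev3_txD.
under [RHS]eq_bigr do rewrite -(E _ (trilin_form_bilin23 Hf _)).
apply: (Et (fun x y => ev2 (fun u v => f (g x) u v) (D y))); split=> [x c y z|y c x z].
  exact: (ev2_comul_scalar LD (trilin_form_bilin23 Hf _) c y z).
rewrite /ev2 mulr_sumr -big_split; apply: eq_bigr => q _ /=.
by rewrite Lg; case: Hf => _ _ ->.
Qed.
End TensorComul.

Section ComulTransfer.
Variables (D D' : A -> seq (A * A)).
Hypothesis E : forall a, teq2 (D a) (D' a).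

Lemma comul_morph_teq2 (g : A -> A) : linear g ->
  (forall a, teq2 (tmap2 g g (D a)) (D (g a))) ->
  forall a, teq2 (tmap2 g g (D' a)) (D' (g a)).
Proof.
move=> Lg Dg a; apply: teq2_trans (teq2_tmap2 Lg Lg (teq2_sym (E a))) _.
exact: teq2_trans (Dg a) (E _).
Qed.

Lemma BiHomCoassoc_teq2 (psi om : A -> A) : linear psi -> linear om ->
  BiHomCoassoc D psi om -> BiHomCoassoc D' psi om.
Proof.
move=> Lpsi Lom [LD Hcomm Dpsi Dom Dcoassoc]; split=> //.
- exact: lin_comul_teq2 LD E.
- exact: comul_morph_teq2.
- exact: comul_morph_teq2.
move=> a; apply: teq3_trans (teq3_sym (teq3_tDx LD Lpsi E (E a))) _.
exact: teq3_trans (Dcoassoc a) (teq3_txD LD Lom E (E a)).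
Qed.

Lemma InfBiHomBialg_teq2 (mu : A -> A -> A) (al be psi om : A -> A) :
  linear al -> linear be -> linear psi -> linear om ->
  InfBiHomBialg mu D al be psi om -> InfBiHomBialg mu D' al be psi om.
Proof.
move=> Lal Lbe Lpsi Lom [Hassoc [Hcoassoc [Dmul Hcomm [Dal Dbe] Hmorph]]].
have [[Lmu_r Lmu_l] _ _ _ _] := Hassoc.
split=> //; split; first exact: BiHomCoassoc_teq2 Hcoassoc.
split=> //; last by split; apply: comul_morph_teq2.
move=> a b; apply: teq2_trans (teq2_sym (E _)) _.
apply: teq2_trans (Dmul a b) _; apply: teq2_cat.
  exact: (teq2_tmap2 (g := mu (om a)) (Lmu_r _) Lbe (E b)).
exact: (teq2_tmap2 (h := mu^~ (psi b)) Lal (fun c x y => Lmu_l _ c x y) (E a)).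
Qed.
End ComulTransfer.
End Tensors.

Section Coboundary.
Variables (K : fieldType) (A : lmodType K).
Variables (mu : A -> A -> A) (al be : A -> A) (r : seq (A * A)).

Lemma ev3_Ar f : trilin_form f ->
  ev3 f (Ar mu al be r) =
  ev3 f (r13r12 mu be r) - ev3 f (r12r23 mu al be r) + ev3 f (r23r13 mu al r).
Proof. by move=> Hf; rewrite /Ar !ev3_cat ev3_neg3 // addrA. Qed.

Lemma ev3_tDx_Delta_r f : trilin_form f ->
  ev3 f (tDx (Delta_r mu al be r) be r) =
  ev3 f (r12r23 mu al be r) - ev3 f (r13r12 mu be r).
Proof.
move=> Hf; rewrite ev3_tDx /ev2 /Delta_r /ev3 /r12r23 /r13r12 !big_allpairs_dep /=.
under eq_bigr do rewrite big_cat !big_map /=.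
rewrite big_split /= exchange_big -sumrN; congr (_ + _).
apply: eq_bigr => p _; rewrite -sumrN; apply: eq_bigr => q _ /=.
exact: scalarN (trilin_form_scalar1 Hf _ _).
Qed.

Lemma ev3_txD_Delta_r f : trilin_form f ->
  ev3 f (txD al (Delta_r mu al be r) r) =
  ev3 f (r23r13 mu al r) - ev3 f (r12r23 mu al be r).
Proof.
move=> Hf; rewrite ev3_txD /ev2 /Delta_r /ev3 /r12r23 /r23r13 !big_allpairs_dep /=.
under eq_bigr do rewrite big_cat !big_map /=.
rewrite big_split /= -sumrN; congr (_ + _).
apply: eq_bigr => p _; rewrite -sumrN; apply: eq_bigr => q _ /=.
exact: scalarN (trilin_form_scalar2 Hf _ _).
Qed.

Lemma Ar_eq0_tDx_Delta_r :
  teq3 (Ar mu al be r) [::] <->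
  teq3 (tDx (Delta_r mu al be r) be r) (r23r13 mu al r).
Proof.
apply: iff_trans (teq3_nil_sub (u := r23r13 mu al r)
                               (v := tDx (Delta_r mu al be r) be r) _) _.
  by move=> f Hf; rewrite ev3_Ar // ev3_tDx_Delta_r //; ring.
by split; apply: teq3_sym.
Qed.

Lemma Ar_eq0_txD_Delta_r :
  teq3 (Ar mu al be r) [::] <->
  teq3 (txD al (Delta_r mu al be r) r) (neg3 (r13r12 mu be r)).
Proof.
apply: teq3_nil_sub => f Hf.
rewrite ev3_Ar // ev3_txD_Delta_r // ev3_neg3 //; ring.
Qed.

Lemma teq3_lact_ract t : bilin_map mu -> linear al -> linear be ->
  teq3 t [::] -> forall a, teq3 (lact mu al be a t) (ract mu al be t a).
Proof.
move=> [Lmu_r Lmu_l] Lal Lbe t0 a.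
apply: teq3_trans (teq3_map (g1 := mu (al a)) (Lmu_r _) Lbe Lbe t0) _.
exact: teq3_sym (teq3_map (g3 := mu^~ (be a)) Lal Lal (fun c x y => Lmu_l _ c x y) t0).
Qed.
End Coboundary.

Theorem proposition5p8 (K : fieldType) (A : lmodType K) (mu : A -> A -> A)
    (al be : {linear A -> A}) :
  (forall r : seq (A * A),
     Quasitriangular mu al be r ->
     [/\ (forall a, teq2 (Delta_r mu al be r a)
                        ([seq (al p.1, mu p.2 a) | p <- r] ++
                         [seq (- mu a p.1, be p.2) | p <- r])),
         teq3 (tDx (Delta_r mu al be r) be r) (r23r13 mu al r) &
         teq3 (txD al (Delta_r mu al be r) r) (neg3 (r13r12 mu be r))])
  /\
  (forall (D : A -> seq (A * A)) (r : seq (A * A)),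
     InfBiHomBialg mu D al be be al ->
     r_invariant al be r ->
     (forall a, teq2 (D a) ([seq (al p.1, mu p.2 a) | p <- r] ++
                            [seq (- mu a p.1, be p.2) | p <- r])) ->
     teq3 (tDx D be r) (r23r13 mu al r) ->
     teq3 (txD al D r) (neg3 (r13r12 mu be r)) ->
     (forall a, teq2 (D a) (Delta_r mu al be r a)) /\
     Quasitriangular mu al be r).
Proof.
have [Lal Lbe] : linear al /\ linear be by split; apply: linearP.
split=> [r [_ Ar0] | D r HD r_inv D_eq tDx_eq _].
  split=> //; first exact/Ar_eq0_tDx_Delta_r.
  exact/Ar_eq0_txD_Delta_r.
have D_Delta_r : forall a, teq2 (D a) (Delta_r mu al be r a) := D_eq.
have [Hassoc [[LD _ _ _ _] _]] := HD.
have Ar0 : teq3 (Ar mu al be r) [::].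
  apply/Ar_eq0_tDx_Delta_r; apply: teq3_trans tDx_eq.
  exact: teq3_sym (teq3_tDx LD Lbe D_Delta_r (fun _ _ => erefl)).
have [Lmu _ _ _ _] := Hassoc.
split=> //; split=> //; split=> //.
- exact: teq3_lact_ract Lmu Lal Lbe Ar0.
- exact: (InfBiHomBialg_teq2 D_Delta_r Lal Lbe Lbe Lal HD).
Qed.
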